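(* Let $n\ge 1$, $0<\alpha\le 1$, let $\Omega\subset\mathbb{R}^n$ be a bounded domain, and let $f\in C(\Omega)$ be bounded with $f\le 0$. Let $u:\mathbb{R}^n\to\mathbb{R}$ be a viscosity supersolution to $\mathcal{L}_\infty u=f$ in $\Omega$. Assume there exists $x_0\in\Omega$ such that $u(y)\ge u(x_0)$ for all $y\in\mathbb{R}^n\setminus\Omega$. Then $u$ is constant on $\mathbb{R}^n$.
   Context: For $0<\alpha\le1$ and a function $\varphi:\mathbb{R}^n\to\mathbb{R}$, the nonlocal infinity Laplacian is $\mathcal{L}_\infty\varphi(x)=\mathcal{L}^+_\infty\varphi(x)+\mathcal{L}^-_\infty\varphi(x)$, where $\mathcal{L}^+_\infty\varphi(x)=\sup_{y\in\mathbb{R}^n}\frac{\varphi(y)-\varphi(x)}{|x-y|^\alpha}$ and $\mathcal{L}^-_\infty\varphi(x)=\inf_{y\in\mathbb{R}^n}\frac{\varphi(y)-\varphi(x)}{|x-y|^\alpha}$ (with $y\neq x$). Viscosity supersolution: a lower semicontinuous $u:\mathbb{R}^n\to\mathbb{R}$ with $|u(x)|\le C(1+|x|)^\beta$ for some $C>0$, $\beta<\alpha$, is a viscosity supersolution to $\mathcal{L}_\infty u=f$ in $\Omega$ if for every $x_0\in\Omega$ and every locally Lipschitz continuous $\varphi:\mathbb{R}^n\to\mathbb{R}$ with $|\varphi(x)|\le C(1+|x|)^\beta$ for some $C>0$, $\beta<\alpha$, such that $\varphi(x_0)=u(x_0)$ and $u\ge\varphi$ on $\mathbb{R}^n$, one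 has $\mathcal{L}_\infty\varphi(x_0)\le f(x_0)$. Viscosity subsolutions are defined analogously with $u$ upper semicontinuous, $u\le\varphi$ on $\mathbb{R}^n$, and $\mathcal{L}_\infty\varphi(x_0)\ge f(x_0)$; a viscosity solution is a continuous function that is both. *)

From mathcomp Require Import all_boot all_order all_algebra.
From mathcomp Require Import all_classical all_reals all_analysis.
Set Implicit Arguments. Unset Strict Implicit. Unset Printing Implicit Defensive.
Import Order.TTheory GRing.Theory Num.Theory.
Import numFieldNormedType.Exports.
Local Open Scope classical_set_scope.
Local Open Scope ring_scope.

Section Defs.
Variables (R : realType) (n : nat).
Notation V := 'rV[R]_n.

(* Euclidean norm |x| on R^n (the library norm on 'rV is the sup norm) *)
Definition enorm (x : V) : R := Num.sqrt (\sum_(i < n) (x ord0 i) ^+ 2).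

Definition growth_ok (alpha : R) (phi : V -> R) : Prop :=
  exists C beta : R, 0 < C /\ beta < alpha /\
    forall x, `|phi x| <= C * powR (1 + enorm x) beta.

Definition locally_lipschitz (phi : V -> R) : Prop :=
  forall x : V, exists r L : R, 0 < r /\
    forall y z : V, enorm (y - x) < r -> enorm (z - x) < r ->
      `|phi y - phi z| <= L * enorm (y - z).

Definition nl_quot (alpha : R) (phi : V -> R) (x : V) : set (\bar R) :=
  [set ((phi y - phi x) / powR (enorm (x - y)) alpha)%:E | y in [set y | y != x]].

Definition Lplus (alpha : R) (phi : V -> R) (x : V) : \bar R :=
  ereal_sup (nl_quot alpha phi x).
Definition Lminus (alpha : R) (phi : V -> R) (x : V) : \bar R :=
  ereal_inf (nl_quot alpha phi x).
Definition Linf (alpha : R) (phi : V -> R) (x : V) : \bar R :=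
  (Lplus alpha phi x + Lminus alpha phi x)%E.

Definition visc_supersolution (alpha : R) (Omega : set V) (f u : V -> R) : Prop :=
  lower_semicontinuous (fun x => (u x)%:E) /\ growth_ok alpha u /\
  forall (x0 : V) (phi : V -> R), Omega x0 ->
    locally_lipschitz phi -> growth_ok alpha phi ->
    phi x0 = u x0 -> (forall x, phi x <= u x) ->
    (Linf alpha phi x0 <= (f x0)%:E)%E.

Definition bounded_domain (Omega : set V) : Prop :=
  Omega !=set0 /\ open Omega /\ connected Omega /\
  exists M : R, forall x, Omega x -> enorm x <= M.
End Defs.

(* If u attains its global minimum at an interior point z and is not constant,
   then u > u(z) + d on a small ball around some w, so the tent function
   u(z) + d * max(0, 1 - |y - w| / r) touches u from below at z.  At z the
   nonlocal infimum of this test function is >= 0 while its supremum is > 0,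
   so L_oo phi(z) > 0 >= f(z), contradicting the supersolution inequality.
   Such an interior minimum exists: u is lower semicontinuous, hence attains
   its minimum on a compact cube containing Omega, and outside Omega u stays
   above u(x0). *)
From mathcomp Require Import all_boot all_order all_algebra.
From mathcomp Require Import all_classical all_reals all_analysis.
From mathcomp Require Import ring lra.
Set Implicit Arguments. Unset Strict Implicit. Unset Printing Implicit Defensive.
Import Order.TTheory GRing.Theory Num.Theory.
Import numFieldNormedType.Exports.
Local Open Scope classical_set_scope.
Local Open Scope ring_scope.

Lemma lower_semicontinuous_compact_min (R : realType) (T : topologicalType)
    (K : set T) (g : T -> R) :
  compact K -> K !=set0 -> lower_semicontinuous (fun x => (g x)%:E) ->
  exists2 c, K c & forall y, K y -> g c <= g y.
Proof.
move=> cK [k Kk] /lower_semicontinuousP lsc_g.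
apply: contrapT => nomin.
have below c : K c -> exists2 y, K y & g y < g c.
  move=> Kc; apply: contrapT => nobelow; apply: nomin; exists c => // y Ky.
  by rewrite leNgt; apply/negP => ygc; apply: nobelow; exists y.
(* The sets [K `&` [set z | g z <= g y]] generate a proper filter; no point c
   can cluster it, as some y has g y < g c and [set x | g y < g x] is open. *)
pose F := filter_from K (fun y => [set z | K z /\ g z <= g y]).
have FF : ProperFilter F.
  apply: filter_from_proper; last by move=> y Ky; exists y.
  apply: filter_from_filter; first by exists k.
  move=> i j Ki Kj; have [le|le] := leP (g i) (g j).
    by exists i => // z [Kz gz]; split; split => //; apply: le_trans le.
  by exists j => // z [Kz gz]; split; split => //; apply: le_trans (ltW le).
have FK : F K by exists k => // z [].
have [c [Kc clc]] := cK F FF FK.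
have [y Ky ygc] := below c Kc.
have Nc : nbhs c [set x | g y < g x].
  apply: open_nbhs_nbhs; split => //.
  by rewrite (_ : mkset _ = [set x | (g y)%:E < (g x)%:E]%E) //; apply/seteqP.
have Fy : F [set z | K z /\ g z <= g y] by exists y.
have [z [[_ zy] yz]] := clc _ _ Fy Nc.
by move: (lt_le_trans yz zy); rewrite ltxx.
Qed.

Lemma normr_max0B (R : realDomainType) (a b : R) :
  `|Order.max 0 a - Order.max 0 b| <= `|a - b|.
Proof.
have e1 : a - b <= `|a - b| := ler_norm _.
have e2 : b - a <= `|a - b| by rewrite distrC ler_norm.
have [ha|ha] := leP a 0; have [hb|hb] := leP b 0;
  rewrite ler_norml; apply/andP; split; lra.
Qed.

Lemma growth_ok_bounded (R : realType) n (alpha : R) (phi : 'rV[R]_n -> R)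
    (B : R) :
  0 < alpha -> (forall x, `|phi x| <= B) -> growth_ok alpha phi.
Proof.
move=> alpha0 phiB; exists (`|B| + 1), 0; split.
  by have := normr_ge0 B; lra.
split=> // x; rewrite powRr0 mulr1; apply: le_trans (phiB x) _.
by have := ler_norm B; lra.
Qed.

Section Enorm.
Variables (R : realType) (n : nat).
Implicit Types x : 'rV[R]_n.

Lemma coord_le_enorm x i : `|x ord0 i| <= enorm x.
Proof.
rewrite /enorm -(sqrtr_sqr (x ord0 i)) ler_sqrt; last first.
  by apply: sumr_ge0 => j _; rewrite sqr_ge0.
by rewrite (bigD1 i) //= lerDl; apply: sumr_ge0 => j _; exact: sqr_ge0.
Qed.

Lemma norm_le_enorm x : `|x| <= enorm x.
Proof.
rewrite [`|x|]mx_normrE; apply: bigmax_le; first exact: sqrtr_ge0.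
by move=> [i j] _ /=; rewrite (ord1 i); exact: coord_le_enorm.
Qed.

Lemma enorm_gt0 x : x != 0 -> 0 < enorm x.
Proof. by rewrite -normr_gt0 => /lt_le_trans; apply; exact: norm_le_enorm. Qed.

End Enorm.

Section Tent.
Variables (R : realType) (n : nat).
Notation V := 'rV[R]_n.

Definition tent (w : V) (r : R) (y : V) : R := Order.max 0 (1 - `|y - w| / r).

Variables (w : V) (r : R).
Hypothesis r_gt0 : 0 < r.

Lemma tent_ge0 y : 0 <= tent w r y.
Proof. by rewrite /tent le_max lexx. Qed.

Lemma tent_le1 y : tent w r y <= 1.
Proof. by rewrite /tent ge_max ler01 /= lerBlDr lerDl divr_ge0 // ltW. Qed.

Lemma tent_center : tent w r w = 1.
Proof. by rewrite /tent subrr normr0 mul0r subr0 max_r ?ler01. Qed.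

Lemma tent_eq0 y : r <= `|y - w| -> tent w r y = 0.
Proof. by move=> ry; rewrite /tent max_l // subr_le0 ler_pdivlMr // mul1r. Qed.

Lemma tent_gt0_ball y : 0 < tent w r y -> `|y - w| < r.
Proof.
by rewrite /tent lt_max ltxx /= subr_gt0 ltr_pdivrMr // mul1r.
Qed.

Lemma tent_lipschitz y z : `|tent w r y - tent w r z| <= enorm (y - z) / r.
Proof.
rewrite /tent; apply: le_trans (normr_max0B _ _) _.
have -> : 1 - `|y - w| / r - (1 - `|z - w| / r) = (`|z - w| - `|y - w|) / r.
  by rewrite mulrBl; ring.
rewrite normrM normfV (gtr0_norm r_gt0) ler_pM2r ?invr_gt0 //.
apply: le_trans (ler_dist_dist _ _) _.
have -> : z - w - (y - w) = - (y - z) by rewrite !opprB addrA subrK.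
by rewrite normrN; exact: norm_le_enorm.
Qed.

Lemma locally_lipschitz_tent (c d : R) :
  0 <= d -> locally_lipschitz (fun y => c + d * tent w r y).
Proof.
move=> d0 x; exists 1, (d / r); split => // y z _ _.
rewrite opprD addrACA subrr add0r -mulrBr normrM (ger0_norm d0) -mulrA.
by rewrite ler_wpM2l // mulrC tent_lipschitz.
Qed.

End Tent.

Section NonlocalOperator.
Variables (R : realType) (n : nat) (alpha : R).
Notation V := 'rV[R]_n.

Lemma Lminus_ge0_at_min (phi : V -> R) z :
  (forall y, phi z <= phi y) -> (0 <= Lminus alpha phi z)%E.
Proof.
move=> zmin; apply/ereal_infP => _ [y _ <-].
by rewrite lee_fin divr_ge0 ?powR_ge0 // subr_ge0.
Qed.

Lemma Lplus_gt0 (phi : V -> R) z w :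
  phi z < phi w -> (0 < Lplus alpha phi z)%E.
Proof.
move=> zw; have wz : w != z by apply: contra_ltN zw => /eqP ->.
apply: (lt_le_trans _ (ereal_sup_ubound (ex_intro2 _ _ w wz erefl))).
rewrite lte_fin divr_gt0 ?subr_gt0 // powR_gt0 // enorm_gt0 // subr_eq0 eq_sym.
exact: wz.
Qed.

Lemma Linf_gt0_at_min (phi : V -> R) z w :
  (forall y, phi z <= phi y) -> phi z < phi w -> (0 < Linf alpha phi z)%E.
Proof.
move=> zmin zw.
by have := lte_leD _ (Lplus_gt0 zw) (Lminus_ge0_at_min zmin); rewrite adde0; exact.
Qed.

End NonlocalOperator.

Section MinimumPrinciple.
Variables (R : realType) (n : nat).
Notation V := 'rV[R]_n.

Lemma exists_global_min_in (Omega : set V) (u : V -> R) x0 (M : R) :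
  (forall x, Omega x -> enorm x <= M) ->
  lower_semicontinuous (fun x => (u x)%:E) ->
  Omega x0 -> (forall y, ~ Omega y -> u x0 <= u y) ->
  exists2 z, Omega z & forall y, u z <= u y.
Proof.
move=> OmegaM lsc Ox0 outside.
pose K := [set v : V | forall i, `[-M, M]%classic (v ord0 i)].
have cK : compact K.
  by apply: (@rV_compact _ n (fun=> `[-M, M]%classic)) => i; exact: segment_compact.
have OmegaK x : Omega x -> K x.
  move=> Ox i /=; rewrite in_itv /= -ler_norml.
  exact: le_trans (coord_le_enorm x i) (OmegaM _ Ox).
have [c Kc cmin] :=
  lower_semicontinuous_compact_min cK (ex_intro _ x0 (OmegaK _ Ox0)) lsc.
have c_globalmin y : u c <= u y.
  have [Ky|Ky] := pselect (K y); first exact: cmin.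
  by apply: le_trans (cmin _ (OmegaK _ Ox0)) (outside _ _) => /OmegaK.
have [Oc|Oc] := pselect (Omega c); first by exists c.
by exists x0 => // y; apply: le_trans (outside _ Oc) (c_globalmin y).
Qed.

Lemma supersolution_min_constant (alpha : R) (Omega : set V) (f u : V -> R) z :
  0 < alpha -> visc_supersolution alpha Omega f u ->
  (forall x, Omega x -> f x <= 0) ->
  Omega z -> (forall y, u z <= u y) -> forall w, u w = u z.
Proof.
move=> alpha0 [lsc [_ visc]] f_le0 Oz zmin w.
apply/eqP; rewrite eq_le zmin andbT leNgt; apply/negP => zw.
pose d := (u w - u z) / 2.
have d0 : 0 < d by rewrite divr_gt0 // subr_gt0.
have [r r0 near_w] : exists2 r, 0 < r & forall y, `|y - w| < r -> u z + d < u y.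
  have dw : ((u z + d)%:E < (u w)%:E)%E by rewrite lte_fin /d; lra.
  have [U NU HU] := lsc w (u z + d) dw.
  have [r r0 rU] := proj1 (nbhs_ballP _ _) NU.
  exists r => // y wy; rewrite -lte_fin; apply/HU/rU.
  by rewrite -ball_normE /= distrC.
pose phi y := u z + d * tent w r y.
have phi_le_u y : phi y <= u y.
  have [tent0|tent_pos] := leP (tent w r y) 0.
    have tent_y0 : tent w r y = 0 by apply/le_anti; rewrite tent0 tent_ge0.
    by rewrite /phi tent_y0 mulr0 addr0.
  have := near_w _ (tent_gt0_ball r0 tent_pos).
  have := tent_le1 w r0 y; rewrite /phi; nra.
have phi_z : phi z = u z.
  rewrite /phi tent_eq0 ?mulr0 ?addr0 // leNgt; apply/negP => /near_w; lra.
have phi_zmin y : phi z <= phi y.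
  by rewrite phi_z /phi lerDl mulr_ge0 ?(ltW d0) ?tent_ge0.
have phi_zw : phi z < phi w by rewrite phi_z /phi tent_center // mulr1 ltrDl.
have phi_growth : growth_ok alpha phi.
  apply: (growth_ok_bounded (B := `|u z| + d)) => // y.
  rewrite /phi; apply: le_trans (ler_normD _ _) _.
  rewrite normrM (gtr0_norm d0) (ger0_norm (tent_ge0 w r y)) lerD2l.
  by rewrite ler_piMr ?(ltW d0) ?tent_le1.
have := visc z phi Oz (locally_lipschitz_tent w r0 _ (ltW d0)) phi_growth
  phi_z phi_le_u.
have := Linf_gt0_at_min alpha phi_zmin phi_zw.
move=> Linf_gt0 /(lt_le_trans Linf_gt0); rewrite lte_fin => f_gt0.
by have := f_le0 _ Oz; rewrite leNgt f_gt0.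
Qed.

End MinimumPrinciple.

Theorem mainTheorem1 (R : realType) (n : nat) (alpha : R)
  (Omega : set 'rV[R]_n) (f u : 'rV[R]_n -> R) (x0 : 'rV[R]_n) :
  (0 < n)%N -> 0 < alpha -> alpha <= 1 ->
  bounded_domain Omega ->
  {within Omega, continuous f} ->
  (exists M : R, forall x, Omega x -> `|f x| <= M) ->
  (forall x, Omega x -> f x <= 0) ->
  visc_supersolution alpha Omega f u ->
  Omega x0 ->
  (forall y, ~ Omega y -> u x0 <= u y) ->
  forall x y, u x = u y.
Proof.
move=> _ alpha0 _ [_ [_ [_ [M OmegaM]]]] _ _ f_le0 super Ox0 outside.
have [z Oz zmin] := exists_global_min_in OmegaM (proj1 super) Ox0 outside.
have u_const := supersolution_min_constant alpha0 super f_le0 Oz zmin.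
by move=> x y; rewrite !u_const.
Qed.
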